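(* Let ${}_{\mathfrak Y}\mathfrak B_{\mathfrak X}$ be a left-fibrant graph of bisets, and let $\dagger$ be a vertex of $\mathfrak Y$ and $*$ a vertex of $\mathfrak X$. Then the natural map \[\bigsqcup_{z\in\rho^{-1}( * )}\pi_1(\mathfrak Y,\dagger,\lambda(z))\otimes_{G_{\lambda(z)}}B_z\longrightarrow\pi_1(\mathfrak B,\dagger,* ),\qquad q\otimes b\mapsto q\otimes b\otimes 1,\] is a bijection (an isomorphism of left $\pi_1(\mathfrak Y,\dagger)$-sets); thus $\pi_1(\mathfrak B,\dagger,* )$ is described by the left-hand side, with the right action of $\pi_1(\mathfrak X,* )$ given by lifting of paths.
   Context: Graphs and graphs of groups. A graph is a set $\mathfrak X=V\sqcup E$ with maps $x\mapsto x^-$, $x\mapsto\bar x$ such that $\bar{\bar x}=x$, $x^-\in V$, and $x=x^-\iff x=\bar x\iff x\in V$; set $x^+=(\bar x)^-$. A graph morphism commutes with $\bar{\ }$ and $^-$ (it may send edges to vertices); it is simplicial if it sends edges to edges. A graph of groups is a connected graph with a group $G_x$ for each $x$ and homomorphisms $g\mapsto g^-\colon G_x\to G_{x^-}$, $g\mapsto\bar g\colon G_x\to G_{\bar x}$, such that $G_x\to G_{\bar x}\to G_x$ is the identity and both maps are the identity when $x\in V$; $g^+=(\bar g)^-$. Its fundamental groupoid $\pi_1(\mathfrak X)$ has object set $V$ and is generated by the $x\in\mathfrak X$ (morphisms from $x^-$ to $x^+$) and the elements of the $G_v$, subject to the relations of the $G_v$, $v=1\in G_v$, $x\bar x=1$,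 $g^-x=xg^+$ ($g\in G_x$). $\pi_1(\mathfrak X,v,w)$ is the set of morphisms from $v$ to $w$; $\pi_1(\mathfrak X,v)=\pi_1(\mathfrak X,v,v)$. Graphs of bisets. A congruence of bisets with respect to homomorphisms $\psi,\phi$ is a map $\beta$ with $(hbg)^\beta=h^\psi b^\beta g^\phi$. For graphs of groups $\mathfrak Y,\mathfrak X$, a $\mathfrak Y$-$\mathfrak X$ graph of bisets is a (not necessarily connected) graph $\mathfrak B$ with graph morphisms $\lambda\colon\mathfrak B\to\mathfrak Y$, $\rho\colon\mathfrak B\to\mathfrak X$, a $G_{\lambda(z)}$-$G_{\rho(z)}$-biset $B_z$ for each $z$, and maps $b\mapsto b^-\colon B_z\to B_{z^-}$, $b\mapsto\bar b\colon B_z\to B_{\bar z}$ that are congruences w.r.t. the corresponding group homomorphisms, with $B_z\to B_{\bar z}\to B_z$ the identity and both maps the identity for vertices; $b^+=(\bar b)^-$. The fundamental biset $\pi_1(\mathfrak B,\dagger,* )$ is the $\pi_1(\mathfrak Y,\dagger)$-$\pi_1(\mathfrak X,* )$-biset $\bigsqcup_{z\in V(\mathfrak B)}\pi_1(\mathfrak Y,\dagger,\lambda(z))\otimes_{G_{\lambda(z)}}B_z\otimes_{G_{\rho(z)}}\pi_1(\mathfrak X,\rho(z),* )$ modulo $q\otimes b^-\otimes p=q\lambda(z)\otimes b^+\otimes\overline{\rho(z)}p$ for edges $z\in\mathfrak B$, $b\in B_z$, $q\in\pi_1(\mathfrak Y,\dagger,\lambda(z)^-)$, $p\in\pi_1(\mathfrak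 X,\rho(z)^-,* )$ ($\lambda(z),\overline{\rho(z)}$ read as groupoid morphisms, trivial if vertices). Left-fibrant: $\rho$ is simplicial, and for every vertex $v\in\mathfrak B$ and every edge $f\in\mathfrak X$ with $f^-=\rho(v)$ the map $\bigsqcup_{e\in\rho^{-1}(f),\,e^-=v}G_{\lambda(v)}\otimes_{G_{\lambda(e)}}B_e\to B_v$, $g\otimes b\mapsto gb^-$, is an isomorphism of $G_{\lambda(v)}$-$G_f$-bisets ($G_{\lambda(e)}$ acting on $G_{\lambda(v)}$ through $G_{\lambda(e)}\to G_{\lambda(e)^-}=G_{\lambda(v)}$, and $G_f$ acting on $B_v$ through $G_f\to G_{\rho(v)}$). *)

(* Graphs of groups and graphs of bisets, encoded "fibrewise":
   all vertex/edge groups of a graph of groups live in one type [ge] with an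
   index map [gidx] (the group G_x is the fibre over x), and likewise all the
   bisets B_z live in one type with index map [bidx].  This avoids dependent
   transports along the propositional equalities  x^{--} = x  etc. *)
From Stdlib Require Import List Relations.
Import ListNotations.
Set Implicit Arguments.

Record Graph := {
  gcar :> Type;
  gbar : gcar -> gcar;
  gsrc : gcar -> gcar;
  gbarK : forall x, gbar (gbar x) = x;
  gsrc_V : forall x, gsrc (gsrc x) = gsrc x;      (* x^- is a vertex *)
  gV_bar : forall x, gsrc x = x <-> gbar x = x
}.

Definition isV (G : Graph) (x : G) : Prop := gsrc G x = x.
Definition gtgt (G : Graph) (x : G) : G := gsrc G (gbar G x).
Arguments isV {G} x.
Arguments gtgt {G} x.

Definition graph_morphism (A B : Graph) (f : A -> B) : Prop :=
  (forall z, f (gbar A z) = gbar B (f z)) /\ (forall z, f (gsrc A z) = gsrc B (f z)).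

Arguments graph_morphism {A B} f.

Definition simplicial (A B : Graph) (f : A -> B) : Prop :=
  forall z : A, ~ isV z -> ~ isV (f z).

Arguments simplicial {A B} f.

Fixpoint edge_path (G : Graph) (v : G) (l : list G) (w : G) : Prop :=
  match l with
  | [] => v = w
  | x :: l' => gsrc G x = v /\ edge_path G (gtgt x) l' w
  end.

Definition connected (G : Graph) : Prop :=
  forall v w : G, isV v -> isV w -> exists l, edge_path G v l w.

Record GoG := {
  ggr :> Graph;
  ge : Type;                           (* disjoint union of all G_x *)
  gidx : ge -> ggr;
  gone : ggr -> ge;
  gmul : ge -> ge -> ge;
  ginv : ge -> ge;
  gidx_one : forall x, gidx (gone x) = x;
  gidx_mul : forall g h, gidx g = gidx h -> gidx (gmul g h) = gidx g;
  gidx_inv : forall g, gidx (ginv g) = gidx g;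
  gmulA : forall g h k, gidx g = gidx h -> gidx h = gidx k ->
            gmul g (gmul h k) = gmul (gmul g h) k;
  gmul1g : forall g, gmul (gone (gidx g)) g = g;
  gmulg1 : forall g, gmul g (gone (gidx g)) = g;
  gmulVg : forall g, gmul (ginv g) g = gone (gidx g);
  gdown : ge -> ge;
  gidx_down : forall g, gidx (gdown g) = gsrc ggr (gidx g);
  gdownM : forall g h, gidx g = gidx h -> gdown (gmul g h) = gmul (gdown g) (gdown h);
  gbarG : ge -> ge;
  gidx_bar : forall g, gidx (gbarG g) = gbar ggr (gidx g);
  gbarM : forall g h, gidx g = gidx h -> gbarG (gmul g h) = gmul (gbarG g) (gbarG h);
  gbarGK : forall g, gbarG (gbarG g) = g;
  gV_id : forall g, isV (gidx g) -> gdown g = g /\ gbarG g = g;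
  gconn : connected ggr
}.

Arguments gidx {_} _.
Arguments gmul {_} _ _.
Arguments ginv {_} _.
Arguments gdown {_} _.
Arguments gbarG {_} _.

Section Groupoid.
Variable X : GoG.

Inductive letter := LEdge (x : X) | LElt (g : ge X).

(* well-formed word = morphism from v to w *)
Fixpoint wf (v : X) (l : list letter) (w : X) : Prop :=
  match l with
  | [] => v = w /\ isV v
  | LEdge x :: l' => gsrc X x = v /\ wf (gtgt x) l' w
  | LElt g :: l' => gidx g = v /\ isV v /\ wf v l' w
  end.

Inductive basic : list letter -> list letter -> Prop :=
| b_mul g h : gidx g = gidx h -> isV (gidx g) ->
    basic [LElt g; LElt h] [LElt (gmul g h)]
| b_one v : isV v -> basic [LElt (gone X v)] []
| b_vert v : isV v -> basic [LEdge v] []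
| b_bar x : basic [LEdge x; LEdge (gbar X x)] []
| b_slide g : basic [LElt (gdown g); LEdge (gidx g)]
                    [LEdge (gidx g); LElt (gdown (gbarG g))].

Definition pstep (v w : X) (u u' : list letter) : Prop :=
  wf v u w /\ wf v u' w /\
  exists a b l r, basic l r /\ u = a ++ l ++ b /\ u' = a ++ r ++ b.

(* equality of morphisms v -> w in pi_1(X) *)
Definition peq (v w : X) : relation (list letter) :=
  clos_refl_sym_trans _ (pstep v w).
End Groupoid.

Arguments LEdge {X} x.
Arguments LElt {X} g.

Record GoB (Y X : GoG) := {
  bgr :> Graph;
  blam : bgr -> Y;
  brho : bgr -> X;
  blam_mor : graph_morphism blam;
  brho_mor : graph_morphism brho;
  be : Type;                           (* disjoint union of all B_z *)
  bidx : be -> bgr;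
  lact : ge Y -> be -> be;
  ract : be -> ge X -> be;
  bidx_lact : forall h b, gidx h = blam (bidx b) -> bidx (lact h b) = bidx b;
  bidx_ract : forall b g, gidx g = brho (bidx b) -> bidx (ract b g) = bidx b;
  lact1 : forall b, lact (gone Y (blam (bidx b))) b = b;
  lactM : forall h h' b, gidx h = blam (bidx b) -> gidx h' = blam (bidx b) ->
            lact (gmul h h') b = lact h (lact h' b);
  ract1 : forall b, ract b (gone X (brho (bidx b))) = b;
  ractM : forall b g g', gidx g = brho (bidx b) -> gidx g' = brho (bidx b) ->
            ract b (gmul g g') = ract (ract b g) g';
  lract : forall h b g, gidx h = blam (bidx b) -> gidx g = brho (bidx b) ->
            lact h (ract b g) = ract (lact h b) g;
  bdown : be -> be;
  bbar : be -> be;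
  bidx_down : forall b, bidx (bdown b) = gsrc bgr (bidx b);
  bidx_bar : forall b, bidx (bbar b) = gbar bgr (bidx b);
  bdown_cong : forall h b g, gidx h = blam (bidx b) -> gidx g = brho (bidx b) ->
     bdown (lact h (ract b g)) = lact (gdown h) (ract (bdown b) (gdown g));
  bbar_cong : forall h b g, gidx h = blam (bidx b) -> gidx g = brho (bidx b) ->
     bbar (lact h (ract b g)) = lact (gbarG h) (ract (bbar b) (gbarG g));
  bbarK : forall b, bbar (bbar b) = b;
  bV_id : forall b, isV (bidx b) -> bdown b = b /\ bbar b = b
}.

Arguments bidx {_ _ _} _.
Arguments lact {_ _ _} _ _.
Arguments ract {_ _ _} _ _.
Arguments bdown {_ _ _} _.
Arguments bbar {_ _ _} _.

Section Bisets.
Variables (Y X : GoG) (B : GoB Y X).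

(* elements g (x) b of  G_lam(v) (x)_{G_lam(e)} B_e,  e in rho^-1(f), e^- = v *)
Definition lf_valid (v : B) (f : X) (gb : ge Y * be B) : Prop :=
  gidx (fst gb) = blam B v /\ brho B (bidx (snd gb)) = f /\
  gsrc B (bidx (snd gb)) = v.

Inductive lf_rel : ge Y * be B -> ge Y * be B -> Prop :=
| lf_tens g h b : gidx h = blam B (bidx b) ->
    lf_rel (gmul g (gdown h), b) (g, lact h b).

Definition lf_eq (v : B) (f : X) : relation (ge Y * be B) :=
  clos_refl_sym_trans _ (fun s t => lf_valid v f s /\ lf_valid v f t /\ lf_rel s t).

Definition lf_map (gb : ge Y * be B) : be B := lact (fst gb) (bdown (snd gb)).

Definition left_fibrant : Prop :=
  simplicial (brho B) /\
  forall (v : B) (f : X), isV v -> ~ isV f -> gsrc X f = brho B v ->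
    (forall c, bidx c = v -> exists gb, lf_valid v f gb /\ lf_map gb = c) /\
    (forall gb gb', lf_valid v f gb -> lf_valid v f gb' ->
       (lf_map gb = lf_map gb' <-> lf_eq v f gb gb')).

(* ---- the fundamental biset pi_1(B, dag, star) ---- *)
Definition triple : Type := (list (letter Y) * be B * list (letter X))%type.

Definition wf3 (dag : Y) (star : X) (t : triple) : Prop :=
  let '(q, b, p) := t in
  isV (bidx b) /\ wf dag q (blam B (bidx b)) /\ wf (brho B (bidx b)) p star.

Inductive trel (dag : Y) (star : X) : triple -> triple -> Prop :=
| t_left q q' b p : peq dag (blam B (bidx b)) q q' -> trel dag star (q, b, p) (q', b, p)
| t_right q b p p' : peq (brho B (bidx b)) star p p' -> trel dag star (q, b, p) (q, b, p')
| t_lact q h b p : gidx h = blam B (bidx b) ->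
    trel dag star (q ++ [LElt h], b, p) (q, lact h b, p)
| t_ract q b g p : gidx g = brho B (bidx b) ->
    trel dag star (q, ract b g, p) (q, b, LElt g :: p)
| t_edge q b p : ~ isV (bidx b) ->
    trel dag star (q, bdown b, p)
      (q ++ [LEdge (blam B (bidx b))], bdown (bbar b),
       LEdge (gbar X (brho B (bidx b))) :: p).

Definition teq (dag : Y) (star : X) : relation triple :=
  clos_refl_sym_trans _
    (fun s t => wf3 dag star s /\ wf3 dag star t /\ trel dag star s t).

(* ---- the left-hand side  \bigsqcup_{z in rho^-1(star)} pi_1(Y,dag,lam z) (x) B_z ---- *)
Definition wf2 (dag : Y) (star : X) (s : list (letter Y) * be B) : Prop :=
  isV (bidx (snd s)) /\ brho B (bidx (snd s)) = star /\
  wf dag (fst s) (blam B (bidx (snd s))).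

Inductive srel (dag : Y) : list (letter Y) * be B -> list (letter Y) * be B -> Prop :=
| s_left q q' b : peq dag (blam B (bidx b)) q q' -> srel dag (q, b) (q', b)
| s_lact q h b : gidx h = blam B (bidx b) -> srel dag (q ++ [LElt h], b) (q, lact h b).

Definition seq2 (dag : Y) (star : X) : relation (list (letter Y) * be B) :=
  clos_refl_sym_trans _
    (fun s t => wf2 dag star s /\ wf2 dag star t /\ srel dag s t).

Definition natmap (s : list (letter Y) * be B) : triple := (fst s, snd s, []).
End Bisets.

Arguments wf3 {Y X} B dag star t.
Arguments teq {Y X} B dag star _ _.
Arguments trel {Y X} B dag star _ _.

(* An element q (x) b (x) p of pi_1(B,dag,star) is pushed to the
   form q' (x) b' (x) 1 by moving the letters of p across the biset one at a
   time: a group element acts on b, and an edge x of X is crossed by writing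
   b = h e^- with rho(e) = x, as left-fibrancy allows, and replacing q (x) b by
   q h lam(e) (x) e^+.  This lifting involves choices, but its result is well
   defined modulo the relations of the left-hand side: two decompositions of b
   are related by the tensor relation of left-fibrancy, equivalent starting
   points stay equivalent, and every defining relation of pi_1(X) and of the
   fundamental biset is respected.  So lifting inverts the natural map. *)

From Stdlib Require Import List Relations Classical.
Import ListNotations.

Lemma clos_rst_guard_iff A (W : A -> Prop) (r : relation A) x y :
  clos_refl_sym_trans A (fun s t => W s /\ W t /\ r s t) x y -> (W x <-> W y).
Proof. induction 1; intuition. Qed.

Section GraphFacts.
Variable G : Graph.

Lemma isV_src (x : G) : isV (gsrc G x).
Proof. apply gsrc_V. Qed.

Lemma isV_tgt (x : G) : isV (gtgt x).
Proof. apply gsrc_V. Qed.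

Lemma gbar_isV (x : G) : isV x -> gbar G x = x.
Proof. apply gV_bar. Qed.

Lemma isV_gbar (x : G) : isV (gbar G x) <-> isV x.
Proof.
  unfold isV; rewrite (gV_bar G (gbar G x)), gV_bar, gbarK.
  split; intros H; symmetry; exact H.
Qed.

Lemma gtgt_isV (x : G) : isV x -> gtgt x = gsrc G x.
Proof. intros H; unfold gtgt; rewrite gbar_isV; auto. Qed.

Lemma gtgt_bar (x : G) : gtgt (gbar G x) = gsrc G x.
Proof. unfold gtgt; rewrite gbarK; reflexivity. Qed.
End GraphFacts.

Lemma morphism_isV (A C : Graph) (f : A -> C) :
  graph_morphism f -> forall x, isV x -> isV (f x).
Proof. intros [_ Hs] x H; unfold isV in *; rewrite <- Hs, H; reflexivity. Qed.

Lemma morphism_tgt (A C : Graph) (f : A -> C) :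
  graph_morphism f -> forall x, f (gtgt x) = gtgt (f x).
Proof. intros [Hb Hs] x; unfold gtgt; rewrite Hs, Hb; reflexivity. Qed.

Section Words.
Variable Z : GoG.

Lemma wf_isV_start (v w : Z) l : wf v l w -> isV v.
Proof.
  destruct l as [|[x|g] l]; simpl; intros H.
  - tauto.
  - destruct H as [<- _]; apply isV_src.
  - tauto.
Qed.

Lemma wf_app (v u w : Z) a c : wf v a u -> wf u c w -> wf v (a ++ c) w.
Proof.
  revert v; induction a as [|[x|g] a IH]; simpl; intros v H1 H2.
  - destruct H1 as [-> _]; exact H2.
  - destruct H1 as [? H1]; split; eauto.
  - destruct H1 as [? [? H1]]; repeat split; eauto.
Qed.

Lemma wf_app_inv (v w : Z) a c : wf v (a ++ c) w -> exists u, wf v a u /\ wf u c w.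
Proof.
  revert v; induction a as [|[x|g] a IH]; simpl; intros v H.
  - exists v; split; [split; [reflexivity | eapply wf_isV_start; eauto] | exact H].
  - destruct H as [? H]; destruct (IH _ H) as [u [? ?]]; exists u; auto.
  - destruct H as [? [? H]]; destruct (IH _ H) as [u [? ?]]; exists u; auto.
Qed.

Lemma peq_wf (v w : Z) l l' : peq v w l l' -> (wf v l w <-> wf v l' w).
Proof. induction 1 as [? ? [? [? _]]| | |]; intuition. Qed.

Lemma peq_basic (v w : Z) l r : basic l r -> wf v l w -> wf v r w -> peq v w l r.
Proof.
  intros Hb H1 H2; apply rst_step; split; [|split]; auto.
  exists [], [], l, r; rewrite !app_nil_r; auto.
Qed.

Lemma peq_ctx (v w u z : Z) l l' a c :
  peq v w l l' -> wf u a v -> wf w c z -> peq u z (a ++ l ++ c) (a ++ l' ++ c).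
Proof.
  intros H Ha Hc; induction H as [l l' [H1 [H2 [a' [b' [l0 [r0 [Hb [-> ->]]]]]]]]| | |].
  - apply rst_step; split; [|split].
    + eapply wf_app; [exact Ha|]; eapply wf_app; [exact H1|exact Hc].
    + eapply wf_app; [exact Ha|]; eapply wf_app; [exact H2|exact Hc].
    + exists (a ++ a'), (b' ++ c), l0, r0; rewrite !app_assoc; auto.
  - apply rst_refl.
  - apply rst_sym; assumption.
  - eapply rst_trans; eassumption.
Qed.

Lemma peq_app_l (v w u : Z) l l' a :
  isV w -> peq v w l l' -> wf u a v -> peq u w (a ++ l) (a ++ l').
Proof.
  intros Hw H Ha; pose proof (peq_ctx v w u w l l' a [] H Ha) as P.
  rewrite !app_nil_r in P; apply P; split; [reflexivity | exact Hw].
Qed.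

Lemma peq_edge_one_bar (y : Z) :
  peq (gsrc Z y) (gsrc Z y) [LEdge y; LElt (gone Z (gtgt y)); LEdge (gbar Z y)] [].
Proof.
  assert (Hy : wf (gtgt y) [LEdge (gbar Z y)] (gsrc Z y))
    by (simpl; rewrite gtgt_bar; auto using isV_src).
  apply rst_trans with (y := [LEdge y; LEdge (gbar Z y)]).
  - apply (peq_ctx (gtgt y) (gtgt y) _ _ [LElt (gone Z (gtgt y))] [] [LEdge y] _).
    + apply peq_basic; [constructor; apply isV_tgt | |];
        simpl; rewrite ?gidx_one; auto using isV_tgt.
    + simpl; auto using isV_tgt.
    + exact Hy.
  - apply peq_basic; [constructor | | simpl; auto using isV_src].
    simpl; auto using isV_src.
Qed.

(* Units are the only idempotents. *)
Lemma hom_gone (phi : ge Z -> ge Z) (F : Z -> Z) :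
  (forall g, gidx (phi g) = F (gidx g)) ->
  (forall g h, gidx g = gidx h -> phi (gmul g h) = gmul (phi g) (phi h)) ->
  forall x, phi (gone Z x) = gone Z (F x).
Proof.
  intros Hi Hm x; set (a := phi (gone Z x)).
  assert (Ha : gidx a = F x) by (unfold a; rewrite Hi, gidx_one; reflexivity).
  assert (Haa : gmul a a = a).
  { unfold a; rewrite <- Hm by reflexivity.
    pose proof (gmul1g Z (gone Z x)) as E; rewrite gidx_one in E; rewrite E; reflexivity. }
  assert (E : gmul (ginv a) (gmul a a) = gmul (gmul (ginv a) a) a)
    by (apply gmulA; rewrite ?gidx_inv; reflexivity).
  rewrite Haa, gmulVg, gmul1g in E; rewrite <- Ha; symmetry; exact E.
Qed.
End Words.

Lemma gdown_one (Z : GoG) x : gdown (gone Z x) = gone Z (gsrc Z x).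
Proof. apply (hom_gone Z gdown (gsrc Z)); [apply gidx_down | apply gdownM]. Qed.

Lemma gbarG_one (Z : GoG) x : gbarG (gone Z x) = gone Z (gbar Z x).
Proof. apply (hom_gone Z gbarG (gbar Z)); [apply gidx_bar | apply gbarM]. Qed.

Section BisetFacts.
Variables (Y X : GoG) (B : GoB Y X).
Local Notation lam := (blam B).
Local Notation rho := (brho B).

Lemma lam_src z : lam (gsrc B z) = gsrc Y (lam z). Proof. apply (proj2 (blam_mor B)). Qed.
Lemma lam_bar z : lam (gbar B z) = gbar Y (lam z). Proof. apply (proj1 (blam_mor B)). Qed.
Lemma rho_src z : rho (gsrc B z) = gsrc X (rho z). Proof. apply (proj2 (brho_mor B)). Qed.
Lemma rho_bar z : rho (gbar B z) = gbar X (rho z). Proof. apply (proj1 (brho_mor B)). Qed.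
Lemma isV_lam (z : B) : isV z -> isV (lam z). Proof. apply morphism_isV, blam_mor. Qed.
Lemma isV_rho (z : B) : isV z -> isV (rho z). Proof. apply morphism_isV, brho_mor. Qed.

Lemma lact_one h b : h = gone Y (lam (bidx b)) -> lact h b = b.
Proof. intros ->; apply lact1. Qed.

Lemma ract_one b g : g = gone X (rho (bidx b)) -> ract b g = b.
Proof. intros ->; apply ract1. Qed.

Lemma bdown_ract b g : gidx g = rho (bidx b) -> bdown (ract b g) = ract (bdown b) (gdown g).
Proof.
  intros Hg.
  pose proof (bdown_cong B (gone Y (lam (bidx b))) b g (gidx_one _ _) Hg) as H.
  rewrite (lact_one _ (ract b g)) in H by (rewrite bidx_ract; auto).
  rewrite H, gdown_one; apply lact_one.
  rewrite bidx_ract, bidx_down, lam_src; auto.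
  rewrite gidx_down, bidx_down, rho_src, Hg; reflexivity.
Qed.

Lemma bdown_lact h b : gidx h = lam (bidx b) -> bdown (lact h b) = lact (gdown h) (bdown b).
Proof.
  intros Hh.
  pose proof (bdown_cong B h b (gone X (rho (bidx b))) Hh (gidx_one _ _)) as H.
  rewrite ract1, gdown_one in H; rewrite H, ract_one; auto.
  rewrite bidx_down, rho_src; reflexivity.
Qed.

Lemma bbar_ract b g : gidx g = rho (bidx b) -> bbar (ract b g) = ract (bbar b) (gbarG g).
Proof.
  intros Hg.
  pose proof (bbar_cong B (gone Y (lam (bidx b))) b g (gidx_one _ _) Hg) as H.
  rewrite (lact_one _ (ract b g)) in H by (rewrite bidx_ract; auto).
  rewrite H, gbarG_one; apply lact_one.
  rewrite bidx_ract, bidx_bar, lam_bar; auto.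
  rewrite gidx_bar, bidx_bar, rho_bar, Hg; reflexivity.
Qed.

Lemma bbar_lact h b : gidx h = lam (bidx b) -> bbar (lact h b) = lact (gbarG h) (bbar b).
Proof.
  intros Hh.
  pose proof (bbar_cong B h b (gone X (rho (bidx b))) Hh (gidx_one _ _)) as H.
  rewrite ract1, gbarG_one in H; rewrite H, ract_one; auto.
  rewrite bidx_bar, rho_bar; reflexivity.
Qed.

Lemma bplus_lact h b : gidx h = lam (bidx b) ->
  bdown (bbar (lact h b)) = lact (gdown (gbarG h)) (bdown (bbar b)).
Proof.
  intros Hh; rewrite bbar_lact, bdown_lact; auto.
  rewrite gidx_bar, bidx_bar, lam_bar, Hh; reflexivity.
Qed.

Lemma bplus_ract b g : gidx g = rho (bidx b) ->
  bdown (bbar (ract b g)) = ract (bdown (bbar b)) (gdown (gbarG g)).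
Proof.
  intros Hg; rewrite bbar_ract, bdown_ract; auto.
  rewrite gidx_bar, bidx_bar, rho_bar, Hg; reflexivity.
Qed.
End BisetFacts.

Section Lifting.
Variables (Y X : GoG) (B : GoB Y X) (dag : Y).
Hypothesis LF : left_fibrant B.
Local Notation lam := (blam B).
Local Notation rho := (brho B).
Local Notation tensor := (list (letter Y) * be B)%type.
Local Notation W v := (wf2 B dag v).
Local Notation E v := (seq2 B dag v).

Lemma seq2_wf2 v s t : E v s t -> (W v s <-> W v t).
Proof. apply clos_rst_guard_iff. Qed.

Lemma seq2_step v s t : W v s -> W v t -> srel B dag s t -> E v s t.
Proof. intros; apply rst_step; auto. Qed.

Lemma wf2_isV v s : W v s -> isV v.
Proof. intros [H1 [<- _]]; apply isV_rho; exact H1. Qed.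

Lemma wf2_lact v q h b : gidx h = lam (bidx b) ->
  (W v (q ++ [LElt h], b) <-> W v (q, lact h b)).
Proof.
  intros Hh; unfold wf2; simpl; rewrite bidx_lact by exact Hh.
  assert (HV : isV (bidx b) -> isV (lam (bidx b))) by apply isV_lam.
  split; intros [H1 [H2 H3]]; repeat split; auto.
  - apply wf_app_inv in H3; destruct H3 as [u [Hq [_ [_ [-> _]]]]]; exact Hq.
  - apply wf_app with (lam (bidx b)); simpl; auto.
Qed.

Lemma wf2_ract v q b g : W v (q, b) -> gidx g = v -> W v (q, ract b g).
Proof.
  intros [H1 [H2 H3]] Hg; simpl in *.
  unfold wf2; simpl; rewrite bidx_ract by congruence; auto.
Qed.

Lemma seq2_lact v q h b : W v (q ++ [LElt h], b) -> gidx h = lam (bidx b) ->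
  E v (q ++ [LElt h], b) (q, lact h b).
Proof.
  intros H Hh; apply seq2_step; [exact H | apply wf2_lact; auto | constructor; exact Hh].
Qed.

Lemma seq2_left v q q' b : W v (q, b) -> peq dag (lam (bidx b)) q q' -> E v (q, b) (q', b).
Proof.
  intros H Hp; apply seq2_step; [exact H | | constructor; exact Hp].
  destruct H as [H1 [H2 H3]]; repeat split; auto; apply (peq_wf _ _ _ _ _ Hp); exact H3.
Qed.

Lemma seq2_ract v s s' g : E v s s' -> W v s -> gidx g = v ->
  E v (fst s, ract (snd s) g) (fst s', ract (snd s') g).
Proof.
  intros H; induction H as [s t [Hs [Ht Hr]]| s | s t H IH | s t u H1 IH1 H2 IH2];
    intros HW Hg.
  - destruct Hr as [q q' b Hp | q h b Hh]; simpl in *.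
    + apply seq2_left; [apply wf2_ract; auto|].
      destruct Hs as [_ [Hs2 _]]; simpl in Hs2; rewrite bidx_ract; congruence.
    + destruct Ht as [_ [Ht2 _]]; simpl in Ht2; rewrite bidx_lact in Ht2 by exact Hh.
      rewrite <- lract by congruence; apply seq2_lact.
      * apply wf2_ract; auto.
      * rewrite bidx_ract by congruence; exact Hh.
  - apply rst_refl.
  - apply rst_sym, IH; [apply (seq2_wf2 _ _ _ H)|]; auto.
  - apply rst_trans with (y := (fst t, ract (snd t) g)); [apply IH1; auto|].
    apply IH2; [apply (seq2_wf2 _ _ _ H1)|]; auto.
Qed.

(* Crossing the edge x of X: by left-fibrancy b = h e^- with rho e = x, and
   q (x) b becomes q h lam(e) (x) e^+ over the far end of x. *)
Definition decomposes (x : X) (d : ge Y * be B) (b : be B) : Prop :=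
  lf_valid B (bidx b) x d /\ lf_map B d = b.

Definition cross (q : list (letter Y)) (d : ge Y * be B) : tensor :=
  (q ++ [LElt (fst d); LEdge (lam (bidx (snd d)))], bdown (bbar (snd d))).

Lemma decomposition_exists x b : isV (bidx b) -> ~ isV x -> gsrc X x = rho (bidx b) ->
  exists d, decomposes x d b.
Proof.
  intros Hb Hx Hs; destruct LF as [_ HLF].
  exact (proj1 (HLF (bidx b) x Hb Hx Hs) b eq_refl).
Qed.

Lemma decomposition_unique (v : B) x d d' : isV v -> ~ isV x -> gsrc X x = rho v ->
  lf_valid B v x d -> lf_valid B v x d' -> lf_map B d = lf_map B d' -> lf_eq B v x d d'.
Proof.
  intros Hv Hx Hs Hd Hd' Heq; destruct LF as [_ HLF].
  apply (proj2 (HLF v x Hv Hx Hs)); assumption.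
Qed.

Lemma wf_cross_tail (v : B) x h e : lf_valid B v x (h, e) -> isV v ->
  wf (lam v) [LElt h; LEdge (lam (bidx e))] (lam (bidx (bdown (bbar e)))).
Proof.
  intros [Hh [_ Hv]] HV; simpl in *.
  repeat split; auto using isV_lam, isV_tgt.
  - rewrite <- lam_src, Hv; reflexivity.
  - unfold gtgt; rewrite bidx_down, bidx_bar, lam_src, lam_bar; reflexivity.
Qed.

Lemma wf2_cross (v : B) x q d : lf_valid B v x d -> isV v -> wf dag q (lam v) ->
  W (gtgt x) (cross q d).
Proof.
  destruct d as [h e]; intros Hd HV Hq.
  pose proof (wf_cross_tail v x h e Hd HV) as Ht.
  destruct Hd as [_ [Hx _]]; simpl in *.
  unfold wf2, cross; simpl; repeat split.
  - rewrite bidx_down; apply isV_src.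
  - rewrite bidx_down, bidx_bar, rho_src, rho_bar, Hx; reflexivity.
  - apply wf_app with (lam v); auto.
Qed.

Lemma seq2_cross_lf_rel (v : B) x q d d' : isV v -> wf dag q (lam v) ->
  lf_valid B v x d -> lf_valid B v x d' -> lf_rel B d d' ->
  E (gtgt x) (cross q d) (cross q d').
Proof.
  intros HV Hq Hd Hd' Hr; destruct Hr as [g h e Hh].
  pose proof (wf2_cross v x q _ Hd HV Hq) as HW.
  destruct Hd as [_ [Hx He]], Hd' as [Hg _]; simpl in *.
  unfold cross; simpl in *; rewrite bidx_lact, bplus_lact by exact Hh.
  set (le := lam (bidx e)); set (k := gdown (gbarG h)); set (bp := bdown (bbar e)).
  assert (HlV : isV (lam v)) by (apply isV_lam; exact HV).
  assert (Hle : gsrc Y le = lam v) by (unfold le; rewrite <- lam_src, He; reflexivity).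
  assert (Hdh : gidx (gdown h) = lam v) by (rewrite gidx_down, Hh; exact Hle).
  assert (Hlt : gtgt le = lam (bidx bp)).
  { unfold le, bp, gtgt; rewrite bidx_down, bidx_bar, lam_src, lam_bar; reflexivity. }
  assert (HbV : isV (lam (bidx bp))) by (rewrite <- Hlt; apply isV_tgt).
  assert (Hk : gidx k = lam (bidx bp)).
  { unfold k, bp; rewrite gidx_down, gidx_bar, bidx_down, bidx_bar, lam_src, lam_bar, Hh.
    reflexivity. }
  assert (Hqg : wf dag (q ++ [LElt g]) (lam v)) by (apply wf_app with (lam v); simpl; auto).
  apply rst_trans with (y := (q ++ [LElt g; LEdge le] ++ [LElt k], bp)).
  - apply seq2_left; [exact HW|].
    apply rst_trans with (y := q ++ [LElt g; LElt (gdown h); LEdge le]).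
    + apply rst_sym; apply (peq_ctx Y (lam v) (lam v) dag (lam (bidx bp))
        [LElt g; LElt (gdown h)] [LElt (gmul g (gdown h))] q [LEdge le]).
      * apply peq_basic; [constructor; simpl; congruence| |];
          simpl; repeat split; auto; rewrite ?gidx_mul; congruence.
      * exact Hq.
      * simpl; rewrite Hlt; auto.
    + pose proof (peq_ctx Y (lam v) (lam (bidx bp)) dag (lam (bidx bp))
        [LElt (gdown h); LEdge le] [LEdge le; LElt k] (q ++ [LElt g]) []) as P.
      rewrite app_nil_r, <- !app_assoc in P; apply P; [| exact Hqg | simpl; auto].
      apply peq_basic; [unfold le, k; rewrite <- Hh; constructor| |];
        simpl; repeat split; auto; congruence.
  - rewrite app_assoc; apply seq2_lact; [| exact Hk].
    apply wf2_lact; [exact Hk|].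
    unfold k, bp, le; rewrite <- bplus_lact by exact Hh.
    pose proof (wf2_cross v x q (g, lact h e)) as L; unfold cross in L; simpl in L.
    rewrite bidx_lact in L by exact Hh; apply L; auto.
    split; simpl; [exact Hg|]; rewrite bidx_lact by exact Hh; auto.
Qed.

Lemma seq2_cross_lf_eq (v : B) x q d d' : isV v -> wf dag q (lam v) ->
  lf_eq B v x d d' -> lf_valid B v x d -> E (gtgt x) (cross q d) (cross q d').
Proof.
  intros HV Hq H; induction H as [d d' [Hd [Hd' Hr]]| d | d d' H IH | d d' d'' H1 IH1 H2 IH2];
    intros Hd0.
  - exact (seq2_cross_lf_rel v x q d d' HV Hq Hd Hd' Hr).
  - apply rst_refl.
  - apply rst_sym, IH, (clos_rst_guard_iff _ _ _ _ _ H), Hd0.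
  - apply rst_trans with (y := cross q d'); [exact (IH1 Hd0)|].
    apply IH2, (clos_rst_guard_iff _ _ _ _ _ H1), Hd0.
Qed.

Lemma seq2_cross_indep q b x d d' : W (gsrc X x) (q, b) -> ~ isV x ->
  decomposes x d b -> decomposes x d' b -> E (gtgt x) (cross q d) (cross q d').
Proof.
  intros [HV [Hx Hq]] Hnx [Hd Hdm] [Hd' Hdm']; simpl in *.
  apply seq2_cross_lf_eq with (bidx b); auto.
  apply decomposition_unique; auto; congruence.
Qed.

Lemma seq2_cross_lact q h b x k e : W (gsrc X x) (q ++ [LElt h], b) ->
  gidx h = lam (bidx b) -> decomposes x (k, e) b ->
  E (gtgt x) (cross (q ++ [LElt h]) (k, e)) (cross q (gmul h k, e)).
Proof.
  intros [HV [Hx Hq]] Hh [Hd _]; simpl in *.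
  pose proof (wf_cross_tail (bidx b) x (gmul h k) e) as Ht.
  pose proof Hd as [Hk [_ _]]; simpl in Hk.
  apply seq2_left; [exact (wf2_cross _ x _ _ Hd HV Hq)|].
  unfold cross; simpl; rewrite <- app_assoc; simpl.
  apply (peq_ctx Y (lam (bidx b)) (lam (bidx b)) dag (lam (bidx (bdown (bbar e))))
    [LElt h; LElt k] [LElt (gmul h k)] q [LEdge (lam (bidx e))]).
  - assert (HbV : isV (lam (bidx b))) by (apply isV_lam; exact HV).
    apply peq_basic; [constructor; congruence| |];
      simpl; repeat split; auto; rewrite ?gidx_mul; congruence.
  - apply wf_app_inv in Hq; destruct Hq as [u [Hq [_ [_ [-> _]]]]]; exact Hq.
  - destruct Hd as [_ He]; refine (proj2 (proj2 (Ht _ HV))).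
    split; [simpl; rewrite gidx_mul by congruence; congruence | exact He].
Qed.

Lemma seq2_cross s s' x d d' : E (gsrc X x) s s' -> W (gsrc X x) s -> ~ isV x ->
  decomposes x d (snd s) -> decomposes x d' (snd s') ->
  E (gtgt x) (cross (fst s) d) (cross (fst s') d').
Proof.
  intros H; revert d d'.
  induction H as [s t [Hs [Ht Hr]]| s | s t H IH | s t u H1 IH1 H2 IH2];
    intros d d' HW Hx Hd Hd'.
  - destruct Hr as [q q' b Hp | q h b Hh]; simpl in *.
    + apply rst_trans with (y := cross q d'); [exact (seq2_cross_indep q b x d d' Hs Hx Hd Hd')|].
      destruct d' as [h' e'], Hs as [HV [_ Hq]]; simpl in *.
      apply seq2_left; [exact (wf2_cross _ x _ _ (proj1 Hd') HV Hq)|].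
      apply (peq_ctx Y dag (lam (bidx b)) dag _ q q' [] _ Hp).
      * split; [reflexivity | exact (wf_isV_start _ _ _ _ Hq)].
      * exact (wf_cross_tail _ x h' e' (proj1 Hd') HV).
    + destruct d as [k e].
      assert (Hhd : decomposes x (gmul h k, e) (lact h b)).
      { destruct Hd as [[Hk [He1 He2]] Hdm]; simpl in *.
        split; [split; [|split]|]; simpl.
        - rewrite gidx_mul by congruence; rewrite bidx_lact by exact Hh; congruence.
        - exact He1.
        - rewrite bidx_lact by exact Hh; exact He2.
        - unfold lf_map in *; simpl in *; rewrite lactM, Hdm; auto;
            rewrite bidx_down; congruence. }
      apply rst_trans with (y := cross q (gmul h k, e)).
      * exact (seq2_cross_lact q h b x k e Hs Hh Hd).
      * exact (seq2_cross_indep q (lact h b) x _ d' Ht Hx Hhd Hd').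
  - exact (seq2_cross_indep (fst s) (snd s) x d d' HW Hx Hd Hd').
  - apply rst_sym, IH; auto; apply (clos_rst_guard_iff _ _ _ _ _ H), HW.
  - assert (HWt : W (gsrc X x) t) by apply (clos_rst_guard_iff _ _ _ _ _ H1), HW.
    destruct HWt as [HV [Hxt Hq]].
    destruct (decomposition_exists x (snd t) HV Hx (eq_sym Hxt)) as [dt Hdt].
    apply rst_trans with (y := cross (fst t) dt); [exact (IH1 d dt HW Hx Hd Hdt)|].
    apply IH2; auto; split; auto.
Qed.

Lemma not_isV_rho (z : B) : ~ isV z -> ~ isV (rho z).
Proof. destruct LF as [Hs _]; apply Hs. Qed.

Lemma decomposes_bar e :
  decomposes (gbar X (rho (bidx e))) (gone Y (lam (bidx (bdown (bbar e)))), bbar e)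
    (bdown (bbar e)).
Proof.
  split; [split; [|split]|]; simpl.
  - apply gidx_one.
  - rewrite bidx_bar, rho_bar; reflexivity.
  - rewrite bidx_down; reflexivity.
  - unfold lf_map; simpl; apply lact_one; reflexivity.
Qed.

(* Crossing rho(e) and then back along its reverse is undone by the relation
   y ybar = 1 of pi_1(Y), once e^+ is decomposed as 1 . (ebar)^-. *)
Lemma seq2_cross_back q e d : ~ isV (bidx e) -> W (gsrc X (rho (bidx e))) (q, bdown e) ->
  decomposes (gbar X (rho (bidx e))) d (bdown (bbar e)) ->
  E (gsrc X (rho (bidx e))) (cross (q ++ [LEdge (lam (bidx e))]) d) (q, bdown e).
Proof.
  intros He [_ [_ Hq]] Hd; simpl in *.
  set (x := rho (bidx e)) in *; set (le := lam (bidx e)).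
  assert (Hx : ~ isV (gbar X x)) by (rewrite isV_gbar; apply not_isV_rho; exact He).
  assert (Hle : gsrc Y le = lam (bidx (bdown e)))
    by (unfold le; rewrite bidx_down, lam_src; reflexivity).
  assert (Hlt : gtgt le = lam (bidx (bdown (bbar e)))).
  { unfold le; rewrite <- morphism_tgt by apply blam_mor.
    unfold gtgt; rewrite bidx_down, bidx_bar; reflexivity. }
  assert (HVp : isV (bidx (bdown (bbar e)))) by (rewrite bidx_down; apply isV_src).
  assert (HW1 : W (gsrc X (gbar X x)) (q ++ [LEdge le], bdown (bbar e))).
  { repeat split; simpl; [exact HVp | |].
    - rewrite bidx_down, bidx_bar, rho_src, rho_bar; reflexivity.
    - apply wf_app with (lam (bidx (bdown e))); [exact Hq|].
      simpl; auto using isV_tgt. }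
  pose proof (seq2_cross_indep _ _ _ d _ HW1 Hx Hd (decomposes_bar e)) as E1.
  pose proof (wf2_cross _ (gbar X x) (q ++ [LEdge le]) _ (proj1 (decomposes_bar e)) HVp
    (proj2 (proj2 HW1))) as HW0.
  unfold cross in E1, HW0; rewrite gtgt_bar in E1, HW0; simpl in E1, HW0.
  rewrite bbarK, <- Hlt in E1, HW0.
  apply (rst_trans _ _ _ _ _ E1), seq2_left; [exact HW0|].
  rewrite <- app_assoc, bidx_bar, lam_bar; fold le; simpl.
  rewrite <- (app_nil_r q) at 2.
  rewrite <- Hle; apply (peq_app_l Y (gsrc Y le)).
  - apply isV_src.
  - apply peq_edge_one_bar.
  - rewrite Hle; exact Hq.
Qed.

(* Lifting a path of X letter by letter; a relation rather than a function
   because decompositions are not unique. *)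
Inductive lifts : tensor -> list (letter X) -> tensor -> Prop :=
| lifts_nil s : lifts s [] s
| lifts_elt q b g p t : lifts (q, ract b g) p t -> lifts (q, b) (LElt g :: p) t
| lifts_vertex s x p t : isV x -> lifts s p t -> lifts s (LEdge x :: p) t
| lifts_edge q b x p d t : ~ isV x -> decomposes x d b -> lifts (cross q d) p t ->
    lifts (q, b) (LEdge x :: p) t.

Lemma lifts_nil_inv s t : lifts s [] t -> t = s.
Proof. intros H; inversion H; reflexivity. Qed.

Lemma lifts_elt_inv q b g p t : lifts (q, b) (LElt g :: p) t -> lifts (q, ract b g) p t.
Proof. intros H; inversion H; assumption. Qed.

Lemma lifts_vertex_inv s x p t : isV x -> lifts s (LEdge x :: p) t -> lifts s p t.
Proof. intros Hx H; inversion H; subst; [assumption | contradiction]. Qed.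

Lemma lifts_edge_inv q b x p t : ~ isV x -> lifts (q, b) (LEdge x :: p) t ->
  exists d, decomposes x d b /\ lifts (cross q d) p t.
Proof. intros Hx H; inversion H; subst; [contradiction | eauto]. Qed.

Lemma lifts_app_inv s a c t : lifts s (a ++ c) t -> exists m, lifts s a m /\ lifts m c t.
Proof.
  revert s; induction a as [|[x|g] a IH]; simpl; intros s H.
  - exists s; split; [constructor | exact H].
  - destruct (classic (isV x)) as [Hx|Hx].
    + destruct (IH s (lifts_vertex_inv _ _ _ _ Hx H)) as [m [H1 H2]].
      exists m; split; [constructor|]; assumption.
    + destruct s as [q b]; destruct (lifts_edge_inv _ _ _ _ _ Hx H) as [d [Hd H']].
      destruct (IH _ H') as [m [H1 H2]].
      exists m; split; [econstructor|]; eassumption.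
  - destruct s as [q b]; destruct (IH _ (lifts_elt_inv _ _ _ _ _ H)) as [m [H1 H2]].
    exists m; split; [constructor|]; assumption.
Qed.

Lemma lifts_wf s p t v w : lifts s p t -> W v s -> wf v p w -> W w t.
Proof.
  intros H; revert v; induction H as [s | q b g p t H IH | s x p t Hx H IH |
    q b x p d t Hx Hd H IH]; simpl; intros v HW Hp.
  - destruct Hp as [<- _]; exact HW.
  - destruct Hp as [Hg [_ Hp]]; exact (IH v (wf2_ract v q b g HW Hg) Hp).
  - destruct Hp as [Hxs Hp]; rewrite gtgt_isV, Hxs in Hp by exact Hx; exact (IH v HW Hp).
  - destruct Hp as [Hxs Hp]; destruct HW as [HV [_ Hq]].
    exact (IH _ (wf2_cross _ x q d (proj1 Hd) HV Hq) Hp).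
Qed.

Lemma lifts_total p v w s : wf v p w -> W v s -> exists t, lifts s p t.
Proof.
  revert v s; induction p as [|[x|g] p IH]; simpl; intros v [q b] Hp HW.
  - exists (q, b); constructor.
  - destruct Hp as [Hxs Hp]; destruct (classic (isV x)) as [Hx|Hx].
    + rewrite gtgt_isV, Hxs in Hp by exact Hx.
      destruct (IH v _ Hp HW) as [t Ht]; exists t; constructor; assumption.
    + destruct HW as [HV [Hb Hq]]; simpl in *.
      destruct (decomposition_exists x b HV Hx (eq_trans Hxs (eq_sym Hb))) as [d Hd].
      destruct (IH _ (cross q d) Hp (wf2_cross _ x q d (proj1 Hd) HV Hq)) as [t Ht].
      exists t; econstructor; eassumption.
  - destruct Hp as [Hg [_ Hp]].
    destruct (IH v (q, ract b g) Hp (wf2_ract v q b g HW Hg)) as [t Ht].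
    exists t; constructor; assumption.
Qed.

Lemma lifts_resp_seq2 p v w s s' t t' : wf v p w -> W v s -> E v s s' ->
  lifts s p t -> lifts s' p t' -> E w t t'.
Proof.
  revert v s s'; induction p as [|[x|g] p IH]; simpl;
    intros v [q b] [q' b'] Hp HW HE Ht Ht'.
  - apply lifts_nil_inv in Ht, Ht'; destruct Hp as [<- _]; subst; exact HE.
  - destruct Hp as [<- Hp]; destruct (classic (isV x)) as [Hx|Hx].
    + apply lifts_vertex_inv in Ht, Ht'; auto.
      rewrite gtgt_isV in Hp by exact Hx; exact (IH _ _ _ Hp HW HE Ht Ht').
    + destruct (lifts_edge_inv _ _ _ _ _ Hx Ht) as [d [Hd Hdt]].
      destruct (lifts_edge_inv _ _ _ _ _ Hx Ht') as [d' [Hd' Hdt']].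
      pose proof HW as [HV [_ Hq]].
      exact (IH _ _ _ Hp (wf2_cross _ x q d (proj1 Hd) HV Hq)
        (seq2_cross (q, b) (q', b') x d d' HE HW Hx Hd Hd') Hdt Hdt').
  - destruct Hp as [Hg [_ Hp]]; apply lifts_elt_inv in Ht, Ht'.
    exact (IH _ _ _ Hp (wf2_ract _ _ _ _ HW Hg) (seq2_ract _ _ _ g HE HW Hg) Ht Ht').
Qed.

Lemma lifts_bar x s t : W (gsrc X x) s ->
  lifts s [LEdge x; LEdge (gbar X x)] t -> E (gsrc X x) t s.
Proof.
  intros HW Ht; destruct s as [q b].
  destruct (classic (isV x)) as [Hx|Hx].
  - apply lifts_vertex_inv, lifts_vertex_inv, lifts_nil_inv in Ht;
      [subst; apply rst_refl | apply isV_gbar | ]; exact Hx.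
  - destruct (lifts_edge_inv _ _ _ _ _ Hx Ht) as [[h e] [Hd Ht1]].
    unfold cross in Ht1; simpl in Ht1.
    apply lifts_edge_inv in Ht1; [|rewrite isV_gbar; exact Hx].
    destruct Ht1 as [d2 [Hd2 Ht2]]; apply lifts_nil_inv in Ht2; subst t.
    destruct Hd as [[Hh [<- Hbe]] Hb]; unfold lf_map in Hb; simpl in *.
    assert (He : ~ isV (bidx e)) by (intros He; apply Hx, isV_rho, He).
    assert (Hh' : gidx h = lam (bidx (bdown e))) by (rewrite bidx_down, Hbe; exact Hh).
    assert (HW1 : W (gsrc X (rho (bidx e))) (q ++ [LElt h], bdown e))
      by (apply wf2_lact; [exact Hh' | rewrite Hb; exact HW]).
    rewrite <- Hb.
    apply rst_trans with (y := (q ++ [LElt h], bdown e)).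
    + replace (q ++ [LElt h; LEdge (lam (bidx e))])
        with ((q ++ [LElt h]) ++ [LEdge (lam (bidx e))]) by (rewrite <- app_assoc; reflexivity).
      exact (seq2_cross_back (q ++ [LElt h]) e d2 He HW1 Hd2).
    + exact (seq2_lact _ _ _ _ HW1 Hh').
Qed.

Lemma lifts_slide g s t t' : W (gsrc X (gidx g)) s ->
  lifts s [LElt (gdown g); LEdge (gidx g)] t ->
  lifts s [LEdge (gidx g); LElt (gdown (gbarG g))] t' -> E (gtgt (gidx g)) t t'.
Proof.
  intros HW Ht Ht'; destruct s as [q b]; apply lifts_elt_inv in Ht.
  assert (Hgd : gidx (gdown g) = rho (bidx b)) by (rewrite gidx_down; symmetry; apply HW).
  destruct (classic (isV (gidx g))) as [Hx|Hx].
  - destruct (gV_id X g Hx) as [Hdg Hbg]; rewrite Hbg, Hdg in *.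
    apply lifts_vertex_inv, lifts_nil_inv in Ht; [|exact Hx].
    apply lifts_vertex_inv, lifts_elt_inv, lifts_nil_inv in Ht'; [|exact Hx].
    subst; apply rst_refl.
  - destruct (lifts_edge_inv _ _ _ _ _ Hx Ht) as [d1 [Hd1 Ht1]].
    destruct (lifts_edge_inv _ _ _ _ _ Hx Ht') as [[k e] [Hd Ht2]].
    apply lifts_nil_inv in Ht1; subst t.
    unfold cross in Ht2; simpl in Ht2; apply lifts_elt_inv, lifts_nil_inv in Ht2; subst t'.
    destruct Hd as [[Hk [Hge Hbe]] Hb]; unfold lf_map in Hb; simpl in *.
    assert (Hd3 : decomposes (gidx g) (k, ract e g) (ract b (gdown g))).
    { split; [split; [|split]|]; simpl; rewrite ?bidx_ract by congruence; auto.
      unfold lf_map; simpl.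
      rewrite bdown_ract, lract, Hb by (rewrite ?bidx_down; congruence); reflexivity. }
    rewrite <- bplus_ract by congruence.
    replace (lam (bidx e)) with (lam (bidx (ract e g))) by (rewrite bidx_ract; congruence).
    exact (seq2_cross_indep q _ (gidx g) d1 (k, ract e g)
      (wf2_ract _ _ _ (gdown g) HW (gidx_down X g)) Hx Hd1 Hd3).
Qed.

Lemma lifts_basic l r v w s t t' : basic l r -> wf v l w -> W v s ->
  lifts s l t -> lifts s r t' -> E w t t'.
Proof.
  intros Hb Hl HW Ht Ht'.
  destruct Hb as [g h Hgh _ | u _ | u Hu | x | g]; simpl in Hl.
  - destruct s as [q b]; destruct Hl as [Hg [_ [_ [_ [<- _]]]]].
    apply lifts_elt_inv, lifts_elt_inv, lifts_nil_inv in Ht.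
    apply lifts_elt_inv, lifts_nil_inv in Ht'; subst.
    rewrite ractM by (destruct HW as [_ [Hb _]]; simpl in Hb; congruence); apply rst_refl.
  - destruct s as [q b]; destruct Hl as [Hg [_ [<- _]]]; rewrite gidx_one in Hg; subst u.
    apply lifts_elt_inv, lifts_nil_inv in Ht; apply lifts_nil_inv in Ht'; subst.
    rewrite ract_one by (f_equal; symmetry; apply HW); apply rst_refl.
  - apply lifts_vertex_inv, lifts_nil_inv in Ht; [|exact Hu].
    apply lifts_nil_inv in Ht'; subst; apply rst_refl.
  - destruct Hl as [<- [_ [Hw _]]]; rewrite gtgt_bar in Hw; subst w.
    apply lifts_nil_inv in Ht'; subst t'; exact (lifts_bar x s t HW Ht).
  - destruct Hl as [Hv [_ [_ [<- _]]]]; rewrite gidx_down in Hv; subst v.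
    exact (lifts_slide g s t t' HW Ht Ht').
Qed.

Lemma lifts_resp_peq p p' v w s t t' : peq v w p p' -> wf v p w -> W v s ->
  lifts s p t -> lifts s p' t' -> E w t t'.
Proof.
  intros H; revert t t'.
  induction H as [p p' [_ [_ [a [c [l [r [Hb [-> ->]]]]]]]]| p | p p' H IH |
    p p' p'' H1 IH1 H2 IH2];
    intros t t' Hp HW Ht Ht'.
  - apply wf_app_inv in Hp; destruct Hp as [u [Ha Hlc]].
    apply wf_app_inv in Hlc; destruct Hlc as [u' [Hl Hc]].
    destruct (lifts_app_inv _ _ _ _ Ht) as [m [Hm Hmt]].
    destruct (lifts_app_inv _ _ _ _ Hmt) as [n [Hn Hnt]].
    destruct (lifts_app_inv _ _ _ _ Ht') as [m' [Hm' Hmt']].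
    destruct (lifts_app_inv _ _ _ _ Hmt') as [n' [Hn' Hnt']].
    assert (HWm : W u m) by exact (lifts_wf _ _ _ _ _ Hm HW Ha).
    assert (Emm : E u m m')
      by exact (lifts_resp_seq2 a v u s s m m' Ha HW (rst_refl _ _ _) Hm Hm').
    assert (HWm' : W u m') by exact (proj1 (seq2_wf2 _ _ _ Emm) HWm).
    destruct (lifts_total l u u' m' Hl HWm') as [n'' Hn''].
    assert (Enn : E u' n n'')
      by exact (lifts_resp_seq2 l u u' m m' n n'' Hl HWm Emm Hn Hn'').
    assert (Enn' : E u' n'' n')
      by exact (lifts_basic l r u u' m' n'' n' Hb Hl HWm' Hn'' Hn').
    apply (lifts_resp_seq2 c u' w n n' t t' Hc (lifts_wf _ _ _ _ _ Hn HWm Hl)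
      (rst_trans _ _ _ _ _ Enn Enn') Hnt Hnt').
  - exact (lifts_resp_seq2 p v w s s t t' Hp HW (rst_refl _ _ _) Ht Ht').
  - apply rst_sym, IH; auto; apply (peq_wf _ _ _ _ _ H), Hp.
  - assert (Hp' : wf v p' w) by apply (peq_wf _ _ _ _ _ H1), Hp.
    destruct (lifts_total p' v w s Hp' HW) as [m Hm].
    exact (rst_trans _ _ _ _ _ (IH1 t m Hp HW Ht Hm) (IH2 m t' Hp' HW Hm Ht')).
Qed.

Lemma wf3_intro v w q b p : W v (q, b) -> wf v p w -> wf3 B dag w (q, b, p).
Proof. intros [HV [Hb Hq]] Hp; simpl in *; subst v; repeat split; assumption. Qed.

Lemma teq_step w t t' : wf3 B dag w t -> wf3 B dag w t' -> trel B dag w t t' ->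
  teq B dag w t t'.
Proof. intros; apply rst_step; auto. Qed.

Lemma teq_cross v w q b x p d : W v (q, b) -> ~ isV x -> gsrc X x = v ->
  decomposes x d b -> wf (gtgt x) p w ->
  teq B dag w (fst (cross q d), snd (cross q d), p) (q, b, LEdge x :: p).
Proof.
  intros HW Hx Hxs Hd Hp; destruct d as [h e].
  pose proof (wf2_cross _ x q _ (proj1 Hd) (proj1 HW) (proj2 (proj2 HW))) as HWc.
  unfold cross in HWc; simpl in HWc.
  destruct Hd as [[Hh [He1 He2]] Hb]; unfold lf_map in Hb; simpl in *.
  assert (He : ~ isV (bidx e)) by (intros He; apply Hx; rewrite <- He1; apply isV_rho, He).
  assert (Hh' : gidx h = lam (bidx (bdown e))) by (rewrite bidx_down, He2; exact Hh).
  assert (HWh : W v (q ++ [LElt h], bdown e))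
    by (apply wf2_lact; [exact Hh' | rewrite Hb; exact HW]).
  assert (Hp2 : wf (gtgt x) [LEdge (gbar X x); LEdge x] (gtgt x)).
  { simpl; rewrite gtgt_bar; auto using isV_tgt. }
  assert (HW2 : W (gtgt x) ((q ++ [LElt h]) ++ [LEdge (lam (bidx e))], bdown (bbar e))).
  { rewrite <- app_assoc; exact HWc. }
  unfold cross; simpl; rewrite <- Hb.
  apply rst_trans with (y := (q ++ [LElt h], bdown e, LEdge x :: p)).
  - apply rst_trans with (y := ((q ++ [LElt h]) ++ [LEdge (lam (bidx e))], bdown (bbar e),
      LEdge (gbar X x) :: LEdge x :: p)).
    + rewrite <- app_assoc; apply teq_step.
      * exact (wf3_intro _ _ _ _ _ HWc Hp).
      * apply wf3_intro with (gtgt x); [exact HWc|].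
        exact (wf_app _ _ _ _ [LEdge (gbar X x); LEdge x] p Hp2 Hp).
      * apply t_right; destruct HWc as [_ [Hrho _]]; simpl in Hrho; rewrite Hrho.
        apply rst_sym; apply (peq_ctx X (gtgt x) (gtgt x) (gtgt x) w
          [LEdge (gbar X x); LEdge x] [] [] p).
        -- apply peq_basic; [rewrite <- (gbarK X x) at 2; constructor| exact Hp2 |].
           simpl; auto using isV_tgt.
        -- simpl; auto using isV_tgt.
        -- exact Hp.
    + apply rst_sym, teq_step.
      * apply wf3_intro with v; [exact HWh | simpl; auto].
      * apply wf3_intro with (gtgt x); [exact HW2|].
        exact (wf_app _ _ _ _ [LEdge (gbar X x); LEdge x] p Hp2 Hp).
      * rewrite <- He1; apply t_edge, He.
  - apply teq_step.
    + apply wf3_intro with v; [exact HWh | simpl; auto].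
    + apply wf3_intro with v; [rewrite Hb; exact HW | simpl; auto].
    + constructor; exact Hh'.
Qed.

Lemma lifts_natmap s p t v w : lifts s p t -> W v s -> wf v p w ->
  teq B dag w (natmap B t) (fst s, snd s, p).
Proof.
  intros H; revert v; induction H as [s | q b g p t H IH | s x p t Hx H IH |
    q b x p d t Hx Hd H IH]; simpl; intros v HW Hp.
  - apply rst_refl.
  - destruct Hp as [Hg [Hv Hp]].
    apply rst_trans with (y := (q, ract b g, p)); [exact (IH v (wf2_ract _ _ _ _ HW Hg) Hp)|].
    apply teq_step.
    + apply wf3_intro with v; [apply wf2_ract|]; assumption.
    + apply wf3_intro with v; [|simpl]; auto.
    + apply t_ract; destruct HW as [_ [Hb _]]; simpl in Hb; congruence.
  - destruct Hp as [Hxs Hp]; rewrite gtgt_isV, Hxs in Hp by exact Hx.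
    assert (Hv : isV v) by exact (wf2_isV _ _ HW).
    apply rst_trans with (y := (fst s, snd s, p)); [exact (IH v HW Hp)|].
    destruct s as [q b]; apply teq_step.
    + apply wf3_intro with v; assumption.
    + apply wf3_intro with v; [|simpl; rewrite gtgt_isV, Hxs]; auto.
    + apply t_right; destruct HW as [_ [Hb _]]; simpl in Hb |- *; rewrite Hb.
      apply rst_sym; apply (peq_ctx X v v v w [LEdge x] [] [] p); simpl.
      * apply peq_basic; [constructor; exact Hx| |];
          simpl; rewrite ?gtgt_isV, ?Hxs by exact Hx; auto.
      * auto.
      * exact Hp.
  - destruct Hp as [Hxs Hp].
    pose proof HW as [HV [_ Hq]].
    apply rst_trans with (y := (fst (cross q d), snd (cross q d), p));
      [exact (IH _ (wf2_cross _ x q d (proj1 Hd) HV Hq) Hp)|].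
    exact (teq_cross v w q b x p d HW Hx Hxs Hd Hp).
Qed.

Lemma wf3_elim w q b p : wf3 B dag w (q, b, p) ->
  W (rho (bidx b)) (q, b) /\ wf (rho (bidx b)) p w.
Proof. intros [HV [Hq Hp]]; repeat split; assumption. Qed.

Lemma lifts_resp_trel w t t' s s' : wf3 B dag w t -> trel B dag w t t' ->
  lifts (fst t) (snd t) s -> lifts (fst t') (snd t') s' -> E w s s'.
Proof.
  intros Ht Hr Hs Hs'.
  destruct Hr as [q q' b p Hpq | q b p p' Hpp | q h b p Hh | q b g p Hg | q b p Hb];
    simpl in Hs, Hs'; destruct (wf3_elim _ _ _ _ Ht) as [HW Hp].
  - exact (lifts_resp_seq2 p _ w _ _ s s' Hp HW (seq2_left _ _ _ _ HW Hpq) Hs Hs').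
  - exact (lifts_resp_peq p p' _ w _ s s' Hpp Hp HW Hs Hs').
  - exact (lifts_resp_seq2 p _ w _ _ s s' Hp HW (seq2_lact _ _ _ _ HW Hh) Hs Hs').
  - apply lifts_elt_inv in Hs'.
    exact (lifts_resp_seq2 p _ w _ _ s s' Hp HW (rst_refl _ _ _) Hs Hs').
  - assert (Hx : ~ isV (gbar X (rho (bidx b)))) by (rewrite isV_gbar; apply not_isV_rho, Hb).
    destruct (lifts_edge_inv _ _ _ _ _ Hx Hs') as [d [Hd Hds]].
    rewrite bidx_down, rho_src in Hp, HW.
    exact (lifts_resp_seq2 p _ w _ _ s s' Hp HW
      (rst_sym _ _ _ _ (seq2_cross_back q b d Hb HW Hd)) Hs Hds).
Qed.

Lemma lifts_resp_teq w t t' s s' : teq B dag w t t' -> wf3 B dag w t ->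
  lifts (fst t) (snd t) s -> lifts (fst t') (snd t') s' -> E w s s'.
Proof.
  intros H; revert s s'.
  induction H as [t t' [Ht [_ Hr]]| t | t t' H IH | t t' t'' H1 IH1 H2 IH2];
    intros s s' Ht0 Hs Hs'.
  - exact (lifts_resp_trel w t t' s s' Ht Hr Hs Hs').
  - destruct t as [[q b] p]; destruct (wf3_elim _ _ _ _ Ht0) as [HW Hp].
    exact (lifts_resp_seq2 p _ w _ _ s s' Hp HW (rst_refl _ _ _) Hs Hs').
  - apply rst_sym, IH; auto; apply (clos_rst_guard_iff _ _ _ _ _ H), Ht0.
  - assert (Ht' : wf3 B dag w t') by apply (clos_rst_guard_iff _ _ _ _ _ H1), Ht0.
    destruct t' as [[q b] p]; destruct (wf3_elim _ _ _ _ Ht') as [HW Hp].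
    destruct (lifts_total p _ w _ Hp HW) as [m Hm].
    exact (rst_trans _ _ _ _ _ (IH1 s m Ht0 Hs Hm) (IH2 m s' Ht' Hm Hs')).
Qed.
End Lifting.

Lemma seq2_teq (Y X : GoG) (B : GoB Y X) (dag : Y) (star : X) s s' :
  seq2 B dag star s s' -> teq B dag star (natmap B s) (natmap B s').
Proof.
  induction 1 as [[q b] [q' b'] [Hs [Hs' Hr]]| | |].
  - assert (Hstar : isV star) by exact (wf2_isV _ _ _ _ _ _ Hs).
    apply rst_step; split; [|split].
    + exact (wf3_intro Y X B dag star star q b [] Hs (conj eq_refl Hstar)).
    + exact (wf3_intro Y X B dag star star q' b' [] Hs' (conj eq_refl Hstar)).
    + destruct Hs as [_ [Hb _]]; simpl in Hb; subst.
      destruct Hr; constructor; assumption.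
  - apply rst_refl.
  - apply rst_sym; assumption.
  - eapply rst_trans; eassumption.
Qed.

Theorem mainTheorem2 (Y X : GoG) (B : GoB Y X) (dag : Y) (star : X) :
  isV dag -> isV star -> left_fibrant B ->
  (forall t, wf3 B dag star t ->
     exists s, wf2 B dag star s /\ teq B dag star (natmap B s) t) /\
  (forall s s', wf2 B dag star s -> wf2 B dag star s' ->
     (teq B dag star (natmap B s) (natmap B s') <-> seq2 B dag star s s')).
Proof.
  intros _ _ LF; split.
  - intros [[q b] p] Ht.
    destruct (wf3_elim Y X B dag _ _ _ _ Ht) as [HW Hp].
    destruct (lifts_total Y X B dag LF p _ star _ Hp HW) as [s Hs].
    exists s; split.
    + exact (lifts_wf Y X B dag _ _ _ _ _ Hs HW Hp).
    + exact (lifts_natmap Y X B dag _ _ _ _ _ Hs HW Hp).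
  - intros [q b] [q' b'] Hs Hs'; split.
    + intros H.
      apply (lifts_resp_teq Y X B dag LF star _ _ _ _ H); [| constructor | constructor].
      exact (wf3_intro Y X B dag star star q b [] Hs (conj eq_refl (wf2_isV _ _ _ _ _ _ Hs))).
    + apply seq2_teq.
Qed.
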